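(* Let $A$ be a finite set of relatively prime positive integers. Then $\mathrm{Geo}(A)\le \mathrm{Add}(A)$.
   Context: $\mathbb{N}$ denotes the set of positive integers; $K-K=\{x-y : x,y\in K\}$. A set of integers is relatively prime if it is nonempty and its elements have no common factor greater than $1$. An $\mathcal{N}$-set in $\mathbb{R}$ is a compact set $K\subseteq\mathbb{R}$ such that for every $x\in\mathbb{R}$ there exists $y\in K$ with $x-y\in\mathbb{Z}$. A representation of $1$ by elements of $A$ consists of pairwise distinct $a_1,\ldots,a_h\in A$, positive integers $w_1,\ldots,w_h$ and signs $\varepsilon_1,\ldots,\varepsilon_h\in\{1,-1\}$ with $\sum_{i=1}^h\varepsilon_i w_i a_i=1$; its weight is $\sum_{i=1}^h w_i+\operatorname{card}(A)-h$. The additive weight $\mathrm{Add}(A)$ is the smallest weight of a representation of $1$ by elements of $A$. The weight of an $\mathcal{N}$-set is its number of connected components, and the geometric weight $\mathrm{Geo}(A)$ is the smallest weight of an $\mathcal{N}$-set $K$ with $A=(K-K)\cap\mathbb{N}$. *)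

From Stdlib Require Import Reals ZArith List Arith.
Open Scope R_scope.

Definition finset_pos (A : list nat) : Prop :=
  NoDup A /\ (forall a, In a A -> (0 < a)%nat).

Definition rel_prime_set (A : list nat) : Prop :=
  A <> nil /\
  (forall d : nat, (forall a, In a A -> Nat.divide d a) -> d = 1%nat).

(* A representation of 1 by elements of A: a list of triples (a_i, w_i, eps_i)
   with pairwise distinct a_i in A, w_i positive, eps_i in {1,-1},
   and sum eps_i * w_i * a_i = 1. *)
Definition is_rep (A : list nat) (r : list (nat * nat * Z)) : Prop :=
  NoDup (map (fun t => fst (fst t)) r) /\
  (forall a w e, In (a, w, e) r -> In a A /\ (0 < w)%nat /\ (e = 1%Z \/ e = (-1)%Z)) /\
  fold_right (fun t s => (snd t * Z.of_nat (snd (fst t)) * Z.of_nat (fst (fst t)) + s)%Z)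
    0%Z r = 1%Z.

Definition rep_weight (A : list nat) (r : list (nat * nat * Z)) : nat :=
  (fold_right (fun t s => snd (fst t) + s) 0 r + length A - length r)%nat.

Definition N_set (K : R -> Prop) : Prop :=
  compact K /\ (forall x : R, exists y, K y /\ exists k : Z, x - y = IZR k).

(* A = (K - K) ∩ N  (with A a set of positive integers) *)
Definition diff_pos_set (K : R -> Prop) (A : list nat) : Prop :=
  forall n : nat, (0 < n)%nat ->
    (In n A <-> exists x y, K x /\ K y /\ x - y = INR n).

Definition connected_R (S : R -> Prop) : Prop :=
  ~ (exists U V : R -> Prop,
       open_set U /\ open_set V /\
       (forall x, S x -> U x \/ V x) /\
       (exists x, S x /\ U x) /\ (exists x, S x /\ V x) /\
       (forall x, S x -> U x -> V x -> False)).

Definition component (K : R -> Prop) (p : R) (x : R) : Prop :=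
  exists S : R -> Prop, connected_R S /\ (forall z, S z -> K z) /\ S p /\ S x.

Definition ncomp_le (K : R -> Prop) (n : nat) : Prop :=
  exists p : nat -> R,
    (forall i, (i < n)%nat -> K (p i)) /\
    (forall x, K x -> exists i, (i < n)%nat /\ component K (p i) x).

From Stdlib Require Import Reals ZArith List Arith Lra Lia Classical Wf_nat.
Open Scope R_scope.

(* Fix a representation r0 of 1 of minimal weight.  Unfolding each term
   eps_i w_i a_i of r0 into w_i copies of the "step" -eps_i a_i gives a list
   ds = (d_0, ..., d_(m-1)) with m = sum_i w_i and sum ds = -1.  With
   s_j = d_0 + ... + d_(j-1), the staircase
       K = U_(j<m) [s_j + j/m, s_j + (j+1)/m]  U  {e + offset_e/m : e in E},
   where E lists the elements of A unused by r0 and the offsets are distinct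
   numbers in (0,1), is an N-set.  Writing points of K as z + t/m with z an
   integer and the level t in [0, m], two points differ by an integer only if
   they have the same level or the extreme levels m and 0; this forces the
   difference to be +-d_j, an element of E, or 0.  Hence (K-K) ∩ N = A, and K
   has at most m + |E| = weight(r0) <= weight(r) components for every r. *)

(** * Compactness, connectedness and component counts on R *)

Lemma compact_union (K1 K2 : R -> Prop) :
  compact K1 -> compact K2 -> compact (fun x => K1 x \/ K2 x).
Proof.
  intros C1 C2. apply compact_P5.
  - unfold closed_set.
    apply open_set_P6 with
      (intersection_domain (complementary K1) (complementary K2)).
    + apply open_set_P3; apply compact_P2; assumption.
    + unfold complementary, intersection_domain.
      split; intros x Hx; [tauto|split; intro; apply Hx; auto].
  - destruct (compact_P1 _ C1) as [lo1 [hi1 H1]].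
    destruct (compact_P1 _ C2) as [lo2 [hi2 H2]].
    exists (Rmin lo1 lo2), (Rmax hi1 hi2).
    pose proof (Rmin_l lo1 lo2); pose proof (Rmin_r lo1 lo2).
    pose proof (Rmax_l hi1 hi2); pose proof (Rmax_r hi1 hi2).
    intros x [Hx|Hx]; [specialize (H1 x Hx)|specialize (H2 x Hx)]; lra.
Qed.

Lemma compact_finite_union (C : nat -> R -> Prop) (n : nat) :
  (forall k, (k < n)%nat -> compact (C k)) ->
  compact (fun x => exists k, (k < n)%nat /\ C k x).
Proof.
  induction n as [|n IH]; intros HC.
  - apply compact_eqDom with (fun _ => False); [apply compact_EMP|].
    split; intros x Hx; [contradiction|destruct Hx as [k [Hk _]]; lia].
  - apply compact_eqDom with (fun x => (exists k, (k < n)%nat /\ C k x) \/ C n x).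
    + apply compact_union; auto.
    + split; intros x Hx.
      * destruct Hx as [[k [Hk Hx]]|Hx]; [exists k|exists n]; split; auto; lia.
      * destruct Hx as [k [Hk Hx]].
        destruct (Nat.eq_dec k n) as [->|Hne]; [right; exact Hx|].
        left; exists k; split; [lia|exact Hx].
Qed.

Lemma connected_ext (S T : R -> Prop) :
  (forall x, S x <-> T x) -> connected_R S -> connected_R T.
Proof.
  intros HST HS [U [V [HU [HV [Hcov [[u [Tu Uu]] [[v [Tv Vv]] Hdis]]]]]]].
  apply HS. exists U, V. repeat split; auto.
  - intros x Sx; apply Hcov, HST, Sx.
  - exists u; split; [apply HST|]; auto.
  - exists v; split; [apply HST|]; auto.
  - intros x Sx; apply Hdis, HST, Sx.
Qed.

(* Separation along [u, v]: if u < v lie in disjoint open sets U and V covering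
   [a, b] ⊇ [u, v], then c = sup {x in [u, v] | U x} can lie neither in U nor
   in V. *)
Lemma interval_no_separation (a b u v : R) (U V : R -> Prop) :
  open_set U -> open_set V ->
  (forall x, a <= x <= b -> U x \/ V x) ->
  (forall x, a <= x <= b -> U x -> V x -> False) ->
  a <= u -> u < v -> v <= b -> U u -> V v -> False.
Proof.
  intros HU HV Hcov Hdis Hau Huv Hvb Uu Vv.
  set (S := fun x => u <= x <= v /\ U x).
  destruct (completeness S) as [c [Hub Hlub]].
  { exists v. intros x [Hx _]; lra. }
  { exists u. split; [lra|exact Uu]. }
  assert (Huc : u <= c) by (apply Hub; split; [lra|exact Uu]).
  assert (Hcv : c <= v) by (apply Hlub; intros x [Hx _]; lra).
  assert (Happrox : forall d, 0 < d -> exists x, S x /\ c - d < x).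
  { intros d Hd. apply NNPP. intros Hno. assert (Hup : is_upper_bound S (c - d)).
    { intros x Sx. apply Rnot_lt_le. intros Hlt. apply Hno. exists x; auto. }
    specialize (Hlub _ Hup). lra. }
  destruct (Hcov c ltac:(lra)) as [Uc|Vc].
  - destruct (HU c Uc) as [d Hd].
    assert (Hc_lt_v : c < v).
    { destruct (Rle_lt_or_eq_dec c v Hcv) as [Hlt| ->]; [exact Hlt|].
      exfalso; apply (Hdis v); auto; lra. }
    set (c' := Rmin (c + d / 2) v).
    assert (Hc' : c < c' <= v).
    { unfold c', Rmin; destruct Rle_dec; pose proof (cond_pos d); lra. }
    assert (Sc' : S c').
    { split; [lra|]. apply Hd. unfold disc. apply Rabs_def1;
        unfold c', Rmin; destruct Rle_dec; pose proof (cond_pos d); lra. }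
    specialize (Hub c' Sc'). lra.
  - destruct (HV c Vc) as [d Hd].
    destruct (Happrox d (cond_pos d)) as [x [[Hx Ux] Hcx]].
    assert (Hxc : x <= c) by (apply Hub; split; auto).
    apply (Hdis x); [lra|exact Ux|].
    apply Hd. unfold disc. apply Rabs_def1; pose proof (cond_pos d); lra.
Qed.

Lemma connected_interval (a b : R) : connected_R (fun x => a <= x <= b).
Proof.
  intros [U [V [HU [HV [Hcov [[u [Su Uu]] [[v [Sv Vv]] Hdis]]]]]]].
  destruct (Rtotal_order u v) as [Hlt|[->|Hgt]].
  - apply (interval_no_separation a b u v U V); auto; lra.
  - exact (Hdis v Sv Uu Vv).
  - apply (interval_no_separation a b v u V U); auto; try lra.
    + intros x Hx; destruct (Hcov x Hx); auto.
    + intros x Hx Vx Ux; exact (Hdis x Hx Ux Vx).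
Qed.

Lemma component_mono (K1 K2 : R -> Prop) (p x : R) :
  (forall y, K1 y -> K2 y) -> component K1 p x -> component K2 p x.
Proof.
  intros Hsub [S [HS [HSK HpS]]]. exists S. split; [exact HS|]. split; auto.
Qed.

Lemma ncomp_le_finite_union (C : nat -> R -> Prop) (p : nat -> R) (n : nat) :
  (forall k, (k < n)%nat -> connected_R (C k) /\ C k (p k)) ->
  ncomp_le (fun x => exists k, (k < n)%nat /\ C k x) n.
Proof.
  intros HC. exists p. split.
  - intros k Hk. exists k. split; [exact Hk|apply HC, Hk].
  - intros x [k [Hk Hx]]. exists k. split; [exact Hk|].
    exists (C k). destruct (HC k Hk) as [Hconn Hp].
    split; [exact Hconn|]. split; [|split; auto].
    intros z Hz. exists k; auto.
Qed.

Lemma ncomp_le_union (K1 K2 : R -> Prop) (n1 n2 : nat) :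
  ncomp_le K1 n1 -> ncomp_le K2 n2 -> ncomp_le (fun x => K1 x \/ K2 x) (n1 + n2).
Proof.
  intros [p1 [Hp1 Hc1]] [p2 [Hp2 Hc2]].
  exists (fun i => if (i <? n1)%nat then p1 i else p2 (i - n1)%nat). split.
  - intros i Hi. destruct (Nat.ltb_spec i n1); [left; auto|right; apply Hp2; lia].
  - intros x [Hx|Hx].
    + destruct (Hc1 x Hx) as [i [Hi Hcomp]]. exists i. split; [lia|].
      destruct (Nat.ltb_spec i n1); [|lia].
      apply component_mono with K1; auto.
    + destruct (Hc2 x Hx) as [i [Hi Hcomp]]. exists (n1 + i)%nat. split; [lia|].
      destruct (Nat.ltb_spec (n1 + i) n1); [lia|].
      replace (n1 + i - n1)%nat with i by lia.
      apply component_mono with K2; auto.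
Qed.

(* A bound on the number of components can be weakened (the set being
   nonempty, extra representatives repeat the first one). *)
Lemma ncomp_le_mono (K : R -> Prop) (n n' : nat) :
  ncomp_le K n -> (0 < n)%nat -> (n <= n')%nat -> ncomp_le K n'.
Proof.
  intros [p [Hp Hc]] Hn Hnn'.
  exists (fun i => if (i <? n)%nat then p i else p 0%nat). split.
  - intros i Hi. destruct (Nat.ltb_spec i n); apply Hp; lia.
  - intros x Hx. destruct (Hc x Hx) as [i [Hi Hcomp]]. exists i. split; [lia|].
    destruct (Nat.ltb_spec i n); [exact Hcomp|lia].
Qed.

(** * Bands {z + t/M : a <= t <= b} and their integer differences *)

Lemma multiple_in_range (M t1 t2 : R) (k : Z) :
  0 < M -> 0 <= t1 <= M -> 0 <= t2 <= M -> t1 - t2 = M * IZR k ->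
  (k = 0%Z /\ t1 = t2) \/ (k = 1%Z /\ t1 = M /\ t2 = 0) \/
  (k = (-1)%Z /\ t1 = 0 /\ t2 = M).
Proof.
  intros HM H1 H2 Hk.
  assert (Hup : (k <= 1)%Z).
  { apply le_IZR. apply Rnot_lt_le. intros Hlt. nra. }
  assert (Hlow : (-1 <= k)%Z).
  { apply le_IZR. apply Rnot_lt_le. intros Hlt. nra. }
  assert (Hk3 : k = (-1)%Z \/ k = 0%Z \/ k = 1%Z) by lia.
  destruct Hk3 as [-> | [-> | ->]]; simpl in Hk;
    [right; right | left | right; left]; repeat split; lra.
Qed.

Section Bands.

Variable M : R.
Hypothesis M_pos : 0 < M.

Definition band (z : Z) (a b : R) (x : R) : Prop :=
  exists t, a <= t <= b /\ x = IZR z + t / M.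

Lemma band_interval (z : Z) (a b x : R) :
  band z a b x <-> IZR z + a / M <= x <= IZR z + b / M.
Proof.
  assert (HinvM : 0 < / M) by (apply Rinv_0_lt_compat; exact M_pos).
  split.
  - intros [t [Ht ->]]. unfold Rdiv.
    split; apply Rplus_le_compat_l, Rmult_le_compat_r; lra.
  - intros Hx. exists ((x - IZR z) * M). split; [|field; lra].
    assert (Ha : a = (a / M) * M) by (field; lra).
    assert (Hb : b = (b / M) * M) by (field; lra).
    split; [rewrite Ha|rewrite Hb]; apply Rmult_le_compat_r; lra.
Qed.

Lemma band_compact (z : Z) (a b : R) : compact (band z a b).
Proof.
  apply compact_eqDom with (fun x => IZR z + a / M <= x <= IZR z + b / M).
  - apply compact_P3.
  - split; intros x Hx; apply band_interval; exact Hx.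
Qed.

Lemma band_connected (z : Z) (a b : R) : connected_R (band z a b).
Proof.
  apply connected_ext with (fun x => IZR z + a / M <= x <= IZR z + b / M).
  - intros x. symmetry. apply band_interval.
  - apply connected_interval.
Qed.

Lemma band_diff (z1 z2 q : Z) (a1 b1 a2 b2 x y : R) :
  0 <= a1 -> b1 <= M -> 0 <= a2 -> b2 <= M ->
  band z1 a1 b1 x -> band z2 a2 b2 y -> x - y = IZR q ->
  exists t1 t2, a1 <= t1 <= b1 /\ a2 <= t2 <= b2 /\
    ((t1 = t2 /\ q = (z1 - z2)%Z) \/
     (t1 = M /\ t2 = 0 /\ q = (z1 - z2 + 1)%Z) \/
     (t1 = 0 /\ t2 = M /\ q = (z1 - z2 - 1)%Z)).
Proof.
  intros Ha1 Hb1 Ha2 Hb2 [t1 [Ht1 ->]] [t2 [Ht2 ->]] Hq.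
  exists t1, t2. split; [exact Ht1|]. split; [exact Ht2|].
  assert (Hk : t1 - t2 = M * IZR (q - z1 + z2)).
  { rewrite plus_IZR, minus_IZR, <- Hq. field. lra. }
  destruct (multiple_in_range M t1 t2 _ M_pos ltac:(lra) ltac:(lra) Hk)
    as [[Hk0 Ht]|[[Hk1 [H1 H2]]|[Hk1 [H1 H2]]]];
    [left|right; left|right; right]; repeat split; auto; lia.
Qed.

End Bands.

Lemma level_in_unit_interval (m : nat) (t : R) :
  (0 < m)%nat -> 0 <= t <= INR m ->
  exists j, (j < m)%nat /\ INR j <= t <= INR j + 1.
Proof.
  induction m as [|m IH]; intros Hm Ht; [lia|].
  destruct (Nat.eq_dec m 0) as [->|Hm0].
  - exists 0%nat. simpl in *. split; [lia|lra].
  - destruct (Rle_dec t (INR m)) as [Hle|Hgt].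
    + destruct IH as [j [Hj Htj]]; [lia|lra|]. exists j. split; [lia|exact Htj].
    + exists m. rewrite S_INR in Ht. split; [lia|lra].
Qed.

Lemma unit_intervals_meet (j1 j2 : nat) (t : R) :
  INR j1 <= t <= INR j1 + 1 -> INR j2 <= t <= INR j2 + 1 ->
  j1 = j2 \/ j1 = S j2 \/ j2 = S j1.
Proof.
  intros H1 H2.
  assert (j1 <= S j2)%nat by (apply INR_le; rewrite S_INR; lra).
  assert (j2 <= S j1)%nat by (apply INR_le; rewrite S_INR; lra).
  lia.
Qed.

Lemma unit_interval_first (j : nat) (t : R) : INR j <= t -> t < 1 -> j = 0%nat.
Proof.
  intros H1 H2. assert (INR j < INR 1) by (simpl; lra). apply INR_lt in H. lia.
Qed.

Lemma unit_interval_last (j m : nat) :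
  (j < m)%nat -> INR m <= INR j + 1 -> j = Nat.pred m.
Proof.
  intros Hj H. assert (m <= S j)%nat by (apply INR_le; rewrite S_INR; lra). lia.
Qed.

Definition prefix_sum (ds : list Z) (j : nat) : Z :=
  fold_right Z.add 0%Z (firstn j ds).

Lemma prefix_sum_S (ds : list Z) (j : nat) :
  prefix_sum ds (S j) = (prefix_sum ds j + nth j ds 0)%Z.
Proof.
  unfold prefix_sum. revert j; induction ds as [|d ds IH]; intros j.
  - destruct j; simpl; lia.
  - destruct j as [|j]; simpl; [lia|]. specialize (IH j). simpl in IH. lia.
Qed.

Lemma prefix_sum_all (ds : list Z) :
  prefix_sum ds (length ds) = fold_right Z.add 0%Z ds.
Proof. unfold prefix_sum. rewrite firstn_all. reflexivity. Qed.

(** * The staircase attached to a step list summing to -1 *)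

(* Distinct offsets in (0, 1) for the isolated points. *)
Definition offset (i : nat) : R := / (INR i + 2).

Lemma offset_bounds (i : nat) : 0 < offset i < 1.
Proof.
  unfold offset. pose proof (pos_INR i). split.
  - apply Rinv_0_lt_compat; lra.
  - rewrite <- Rinv_1. apply Rinv_1_lt_contravar; lra.
Qed.

Lemma offset_inj (i k : nat) : offset i = offset k -> i = k.
Proof.
  unfold offset. intros H. apply (f_equal Rinv) in H. rewrite !Rinv_inv in H.
  apply INR_eq. lra.
Qed.

Section Staircase.

Variable ds : list Z.
Variable E : list nat.
Hypothesis ds_sum : fold_right Z.add 0%Z ds = (-1)%Z.

Definition piece (j : nat) : R -> Prop :=
  band (INR (length ds)) (prefix_sum ds j) (INR j) (INR j + 1).

Definition mark (i : nat) : R -> Prop :=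
  band (INR (length ds)) (Z.of_nat (nth i E 0%nat)) (offset i) (offset i).

Definition staircase (x : R) : Prop :=
  (exists j, (j < length ds)%nat /\ piece j x) \/
  (exists i, (i < length E)%nat /\ mark i x).

Lemma steps_nonempty : (0 < length ds)%nat.
Proof. destruct ds; simpl in *; [discriminate|lia]. Qed.

Lemma levels_pos : 1 <= INR (length ds).
Proof.
  pose proof steps_nonempty. apply (le_INR 1) in H. simpl in H. lra.
Qed.

Lemma piece_levels (j : nat) :
  (j < length ds)%nat -> 0 <= INR j /\ INR j + 1 <= INR (length ds).
Proof.
  intros Hj. split; [apply pos_INR|]. rewrite <- S_INR. apply le_INR. lia.
Qed.

Lemma mark_levels (i : nat) : 0 <= offset i /\ offset i <= INR (length ds).
Proof. pose proof (offset_bounds i); pose proof levels_pos; lra. Qed.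

(* The staircase is compact and meets every class of R modulo Z: the pieces
   together cover all levels in [0, m]. *)
Lemma staircase_N_set : N_set staircase.
Proof.
  pose proof levels_pos as HM. split.
  - apply compact_union; apply compact_finite_union;
      intros; apply band_compact; lra.
  - (* translate x into the first unit of R, then pick the piece of its level *)
    intros x. destruct (archimed x) as [Hup1 Hup2].
    set (q := (up x - 1)%Z).
    assert (Hfrac : 0 <= x - IZR q <= 1) by (unfold q; rewrite minus_IZR; simpl; lra).
    set (t := (x - IZR q) * INR (length ds)).
    destruct (level_in_unit_interval (length ds) t) as [j [Hj Ht]].
    { exact steps_nonempty. }
    { unfold t. split; nra. }
    exists (IZR (prefix_sum ds j) + t / INR (length ds)). split.
    + left. exists j. split; [exact Hj|]. exists t. auto.
    + exists (q - prefix_sum ds j)%Z. rewrite minus_IZR. unfold t. field. lra.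
Qed.

Lemma staircase_ncomp : ncomp_le staircase (length ds + length E).
Proof.
  pose proof levels_pos as HM. apply ncomp_le_union.
  - apply ncomp_le_finite_union with
      (p := fun j => IZR (prefix_sum ds j) + INR j / INR (length ds)).
    intros j _. split; [apply band_connected; lra|]. exists (INR j). split; [lra|auto].
  - apply ncomp_le_finite_union with
      (p := fun i => IZR (Z.of_nat (nth i E 0%nat)) + offset i / INR (length ds)).
    intros i _. split; [apply band_connected; lra|]. exists (offset i). split; [lra|auto].
Qed.

Lemma piece_pair_shift (j1 j2 : nat) (t1 t2 : R) (q : Z) :
  (j1 < length ds)%nat -> (j2 < length ds)%nat ->
  INR j1 <= t1 <= INR j1 + 1 -> INR j2 <= t2 <= INR j2 + 1 ->
  ((t1 = t2 /\ q = (prefix_sum ds j1 - prefix_sum ds j2)%Z) \/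
   (t1 = INR (length ds) /\ t2 = 0 /\ q = (prefix_sum ds j1 - prefix_sum ds j2 + 1)%Z) \/
   (t1 = 0 /\ t2 = INR (length ds) /\ q = (prefix_sum ds j1 - prefix_sum ds j2 - 1)%Z)) ->
  q = 0%Z \/ exists d, In d ds /\ Z.abs q = Z.abs d.
Proof.
  intros Hj1 Hj2 Ht1 Ht2 Hcases.
  (* the wrap-around step: s_(m-1) + d_(m-1) = -1 *)
  assert (Hwrap : (prefix_sum ds (Nat.pred (length ds))
                   + nth (Nat.pred (length ds)) ds 0 = -1)%Z).
  { rewrite <- prefix_sum_S, Nat.succ_pred_pos by exact steps_nonempty.
    rewrite prefix_sum_all. exact ds_sum. }
  assert (Hlast : In (nth (Nat.pred (length ds)) ds 0%Z) ds).
  { apply nth_In. pose proof steps_nonempty. lia. }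
  destruct Hcases as [[-> ->]|[[-> [-> ->]]|[-> [-> ->]]]].
  - destruct (unit_intervals_meet j1 j2 t2 Ht1 Ht2) as [->|[->| ->]].
    + left. lia.
    + right. exists (nth j2 ds 0%Z). split; [apply nth_In; lia|].
      rewrite prefix_sum_S. f_equal. lia.
    + right. exists (nth j1 ds 0%Z). split; [apply nth_In; lia|].
      rewrite prefix_sum_S. lia.
  - rewrite (unit_interval_first j2 0) by lra.
    rewrite (unit_interval_last j1 (length ds)) by (auto; lra).
    right. eexists; split; [exact Hlast|]. cbn [prefix_sum firstn fold_right]. lia.
  - rewrite (unit_interval_first j1 0) by lra.
    rewrite (unit_interval_last j2 (length ds)) by (auto; lra).
    right. eexists; split; [exact Hlast|]. cbn [prefix_sum firstn fold_right]. lia.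
Qed.

Lemma staircase_diff_sound (n : nat) (x y : R) :
  (0 < n)%nat -> staircase x -> staircase y -> x - y = INR n ->
  (exists d, In d ds /\ Z.abs d = Z.of_nat n) \/ In n E.
Proof.
  intros Hn Kx Ky Hxy. rewrite INR_IZR_INZ in Hxy.
  pose proof levels_pos as HM.
  assert (HM0 : 0 < INR (length ds)) by lra.
  destruct Kx as [[j1 [Hj1 Px]]|[i1 [Hi1 Mx]]];
    destruct Ky as [[j2 [Hj2 Py]]|[i2 [Hi2 My]]].
  - destruct (piece_levels j1 Hj1) as [Ha1 Hb1].
    destruct (piece_levels j2 Hj2) as [Ha2 Hb2].
    destruct (band_diff _ HM0 _ _ _ _ _ _ _ _ _ Ha1 Hb1 Ha2 Hb2 Px Py Hxy)
      as [t1 [t2 [Ht1 [Ht2 Hcases]]]].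
    destruct (piece_pair_shift j1 j2 t1 t2 _ Hj1 Hj2 Ht1 Ht2 Hcases)
      as [H0|[d [Hd Habs]]]; [lia|].
    left. exists d. split; [exact Hd|lia].
  - (* a piece above a mark: only the first piece shares the mark's level,
       and the difference is then negative *)
    destruct (piece_levels j1 Hj1) as [Ha1 Hb1].
    destruct (mark_levels i2) as [Ha2 Hb2].
    pose proof (offset_bounds i2).
    destruct (band_diff _ HM0 _ _ _ _ _ _ _ _ _ Ha1 Hb1 Ha2 Hb2 Px My Hxy)
      as [t1 [t2 [Ht1 [Ht2 [[-> Hq]|[[_ [-> _]]|[_ [-> _]]]]]]]]; try lra.
    rewrite (unit_interval_first j1 t2) in Hq by lra.
    cbn [prefix_sum firstn fold_right] in Hq. lia.
  - (* a mark above a piece: the difference is the element of E *)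
    destruct (mark_levels i1) as [Ha1 Hb1].
    destruct (piece_levels j2 Hj2) as [Ha2 Hb2].
    pose proof (offset_bounds i1).
    destruct (band_diff _ HM0 _ _ _ _ _ _ _ _ _ Ha1 Hb1 Ha2 Hb2 Mx Py Hxy)
      as [t1 [t2 [Ht1 [Ht2 [[-> Hq]|[[-> _]|[-> _]]]]]]]; try lra.
    rewrite (unit_interval_first j2 t2) in Hq by lra.
    cbn [prefix_sum firstn fold_right] in Hq.
    right. replace n with (nth i1 E 0%nat) by lia. apply nth_In, Hi1.
  - (* two marks share a level only if they coincide *)
    destruct (mark_levels i1) as [Ha1 Hb1].
    destruct (mark_levels i2) as [Ha2 Hb2].
    pose proof (offset_bounds i1); pose proof (offset_bounds i2).
    destruct (band_diff _ HM0 _ _ _ _ _ _ _ _ _ Ha1 Hb1 Ha2 Hb2 Mx My Hxy)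
      as [t1 [t2 [Ht1 [Ht2 [[Heq Hq]|[[-> _]|[-> _]]]]]]]; try lra.
    assert (i1 = i2) as -> by (apply offset_inj; lra). lia.
Qed.

(* Each step d_j is realised as a difference: at the junction of pieces j and
   j+1, or between the two ends of the staircase for the last step. *)
Lemma step_realized (j : nat) :
  (j < length ds)%nat ->
  exists x y, staircase x /\ staircase y /\ x - y = IZR (nth j ds 0%Z).
Proof.
  intros Hj. pose proof levels_pos as HM.
  destruct (Nat.eq_dec (S j) (length ds)) as [Hlast|Hinner].
  - exists (IZR (prefix_sum ds 0) + 0 / INR (length ds)),
           (IZR (prefix_sum ds j) + INR (length ds) / INR (length ds)).
    split; [left; exists 0%nat; split; [lia|exists 0; simpl; split; [lra|auto]]|].
    split; [left; exists j; split; [lia|exists (INR (length ds))]|].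
    { rewrite <- Hlast, S_INR. split; [lra|reflexivity]. }
    assert (Hstep : (nth j ds 0 = -1 - prefix_sum ds j)%Z).
    { rewrite <- ds_sum, <- prefix_sum_all, <- Hlast, prefix_sum_S. lia. }
    rewrite Hstep, minus_IZR. cbn [prefix_sum firstn fold_right IZR]. field. lra.
  - exists (IZR (prefix_sum ds (S j)) + INR (S j) / INR (length ds)),
           (IZR (prefix_sum ds j) + INR (S j) / INR (length ds)).
    split; [left; exists (S j); split; [lia|exists (INR (S j)); split; [lra|auto]]|].
    split; [left; exists j; split; [lia|exists (INR (S j)); rewrite S_INR; split; [lra|auto]]|].
    rewrite prefix_sum_S, plus_IZR. ring.
Qed.

Lemma staircase_diff_complete (n : nat) :
  (exists d, In d ds /\ Z.abs d = Z.of_nat n) \/ In n E ->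
  exists x y, staircase x /\ staircase y /\ x - y = INR n.
Proof.
  pose proof levels_pos as HM. rewrite INR_IZR_INZ.
  intros [[d [Hd Habs]]|HE].
  - destruct (In_nth ds d 0%Z Hd) as [j [Hj <-]].
    destruct (step_realized j Hj) as [x [y [Kx [Ky Hxy]]]].
    destruct (Z.abs_spec (nth j ds 0%Z)) as [[Hpos Heq]|[Hneg Heq]].
    + exists x, y. rewrite <- Habs, Heq. auto.
    + exists y, x. rewrite <- Habs, Heq, opp_IZR. repeat split; auto. lra.
  - destruct (In_nth E n 0%nat HE) as [i [Hi Hn]].
    pose proof (offset_bounds i).
    exists (IZR (Z.of_nat n) + offset i / INR (length ds)),
           (IZR (prefix_sum ds 0) + offset i / INR (length ds)).
    split; [right; exists i; split; [exact Hi|exists (offset i); rewrite Hn; split; [lra|auto]]|].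
    split; [left; exists 0%nat; split; [exact steps_nonempty|exists (offset i); simpl; split; [lra|auto]]|].
    cbn [prefix_sum firstn fold_right IZR]. ring.
Qed.

Lemma staircase_diff (n : nat) :
  (0 < n)%nat ->
  ((exists x y, staircase x /\ staircase y /\ x - y = INR n) <->
   (exists d, In d ds /\ Z.abs d = Z.of_nat n) \/ In n E).
Proof.
  intros Hn. split.
  - intros [x [y [Kx [Ky Hxy]]]]. exact (staircase_diff_sound n x y Hn Kx Ky Hxy).
  - apply staircase_diff_complete.
Qed.

End Staircase.

(** * Steps of a representation of 1 *)

Definition rep_elems (r : list (nat * nat * Z)) : list nat :=
  map (fun t => fst (fst t)) r.

Lemma rep_elems_incl (A : list nat) (r : list (nat * nat * Z)) :
  is_rep A r -> incl (rep_elems r) A.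
Proof.
  intros [_ [Hr _]] a Ha. apply in_map_iff in Ha.
  destruct Ha as [[[a' w] e] [<- Hin]]. apply (Hr a' w e Hin).
Qed.

Definition rep_steps (r : list (nat * nat * Z)) : list Z :=
  flat_map (fun t => repeat (- (snd t * Z.of_nat (fst (fst t))))%Z (snd (fst t))) r.

Lemma rep_steps_length (r : list (nat * nat * Z)) :
  length (rep_steps r) = fold_right (fun t s => (snd (fst t) + s)%nat) 0%nat r.
Proof.
  induction r as [|t r IH]; simpl; [reflexivity|].
  rewrite length_app, repeat_length, IH. reflexivity.
Qed.

Lemma sum_app (l1 l2 : list Z) :
  fold_right Z.add 0%Z (l1 ++ l2) =
  (fold_right Z.add 0%Z l1 + fold_right Z.add 0%Z l2)%Z.
Proof. induction l1; simpl; lia. Qed.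

Lemma sum_repeat (v : Z) (w : nat) :
  fold_right Z.add 0%Z (repeat v w) = (Z.of_nat w * v)%Z.
Proof. induction w as [|w IH]; [reflexivity|]. cbn [repeat fold_right]. lia. Qed.

Lemma rep_steps_sum (A : list nat) (r : list (nat * nat * Z)) :
  is_rep A r -> fold_right Z.add 0%Z (rep_steps r) = (-1)%Z.
Proof.
  intros [_ [_ Hsum]].
  enough (Hneg : fold_right Z.add 0%Z (rep_steps r) =
    (- fold_right (fun t s => (snd t * Z.of_nat (snd (fst t)) * Z.of_nat (fst (fst t)) + s)%Z)
         0%Z r)%Z) by (rewrite Hneg, Hsum; reflexivity).
  clear Hsum. induction r as [|t r IH]; [reflexivity|].
  unfold rep_steps in *. simpl. rewrite sum_app, sum_repeat, IH. lia.
Qed.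

Lemma rep_steps_abs (A : list nat) (r : list (nat * nat * Z)) (n : nat) :
  is_rep A r ->
  ((exists d, In d (rep_steps r) /\ Z.abs d = Z.of_nat n) <-> In n (rep_elems r)).
Proof.
  intros [_ [Hr _]]. unfold rep_steps, rep_elems. split.
  - intros [d [Hd Habs]]. apply in_flat_map in Hd.
    destruct Hd as [[[a w] e] [Hin Hd]]. apply repeat_spec in Hd. simpl in Hd.
    apply in_map_iff. exists (a, w, e). split; [|exact Hin]. simpl.
    destruct (Hr a w e Hin) as [_ [_ [-> | ->]]]; lia.
  - intros Hn. apply in_map_iff in Hn. destruct Hn as [[[a w] e] [Ha Hin]].
    simpl in Ha. subst a. destruct (Hr n w e Hin) as [_ [Hw He]].
    exists (- (e * Z.of_nat n))%Z. split.
    + apply in_flat_map. exists (n, w, e). split; [exact Hin|].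
      destruct w as [|w]; [lia|]. left; reflexivity.
    + destruct He as [-> | ->]; lia.
Qed.

(** * Existence of a representation (Bezout) *)

Definition lin_comb (c : nat -> Z) (l : list nat) : Z :=
  fold_right (fun a s => (c a * Z.of_nat a + s)%Z) 0%Z l.

Definition list_gcd (l : list nat) : Z :=
  fold_right (fun a g => Z.gcd (Z.of_nat a) g) 0%Z l.

Lemma list_gcd_bezout (l : list nat) :
  NoDup l -> exists c, lin_comb c l = list_gcd l.
Proof.
  induction l as [|a l IH]; intros Hnd.
  - exists (fun _ => 0%Z). reflexivity.
  - inversion Hnd as [|? ? Ha Hl]; subst. destruct (IH Hl) as [c Hc].
    destruct (Z.gcd_bezout (Z.of_nat a) (list_gcd l) _ eq_refl) as [u [v Huv]].
    exists (fun x => if Nat.eqb x a then u else (v * c x)%Z).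
    (* the coefficients of l are all rescaled by v since a does not occur in l *)
    assert (Hscale : lin_comb (fun x => if Nat.eqb x a then u else (v * c x)%Z) l
                     = (v * lin_comb c l)%Z).
    { clear - Ha. induction l as [|b l IHl]; simpl; [lia|].
      destruct (Nat.eqb_spec b a) as [->|Hba]; [exfalso; apply Ha; left; auto|].
      rewrite IHl; [lia|]. intro; apply Ha; right; auto. }
    simpl. rewrite Nat.eqb_refl, Hscale, Hc. simpl in Huv. lia.
Qed.

Lemma list_gcd_divides (l : list nat) (a : nat) :
  In a l -> (list_gcd l | Z.of_nat a)%Z.
Proof.
  induction l as [|b l IH]; simpl; [intros []|]. intros [->|H].
  - apply Z.gcd_divide_l.
  - eapply Z.divide_trans; [apply Z.gcd_divide_r|auto].
Qed.

Lemma rel_prime_list_gcd (A : list nat) :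
  finset_pos A -> rel_prime_set A -> list_gcd A = 1%Z.
Proof.
  intros [_ Hpos] [_ Hrp].
  assert (Hnn : (0 <= list_gcd A)%Z) by (destruct A; simpl; [lia|apply Z.gcd_nonneg]).
  enough (Z.to_nat (list_gcd A) = 1%nat) by lia.
  apply Hrp. intros a Ha. destruct (list_gcd_divides A a Ha) as [k Hk].
  pose proof (Hpos a Ha). exists (Z.to_nat k).
  assert (0 <= k)%Z by nia.
  rewrite <- Z2Nat.inj_mul, <- Hk, Nat2Z.id by assumption. reflexivity.
Qed.

Definition rep_of (c : nat -> Z) (A : list nat) : list (nat * nat * Z) :=
  map (fun a => (a, Z.to_nat (Z.abs (c a)), Z.sgn (c a)))
      (filter (fun a => negb (Z.eqb (c a) 0)) A).

Lemma rep_of_value (c : nat -> Z) (A : list nat) :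
  fold_right (fun t s => (snd t * Z.of_nat (snd (fst t)) * Z.of_nat (fst (fst t)) + s)%Z)
    0%Z (rep_of c A) = lin_comb c A.
Proof.
  unfold rep_of. induction A as [|a l IH]; simpl; [reflexivity|].
  destruct (Z.eqb_spec (c a) 0) as [E|E]; simpl; rewrite IH.
  - rewrite E. lia.
  - rewrite Z2Nat.id by lia. destruct (c a); simpl; lia.
Qed.

Lemma exists_rep (A : list nat) :
  finset_pos A -> rel_prime_set A -> exists r, is_rep A r.
Proof.
  intros HA HR. pose proof HA as [Hnd _].
  destruct (list_gcd_bezout A Hnd) as [c Hc].
  exists (rep_of c A). split; [|split].
  - unfold rep_of, rep_elems. rewrite map_map. simpl. rewrite map_id.
    apply NoDup_filter, Hnd.
  - intros a w e H. unfold rep_of in H. apply in_map_iff in H.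
    destruct H as [x [Hx Hin]]. apply filter_In in Hin. destruct Hin as [Hin Hf].
    injection Hx as <- <- <-. split; [exact Hin|].
    destruct (Z.eqb_spec (c x) 0); [discriminate|].
    split; [lia|]. destruct (c x); simpl; auto; lia.
  - rewrite rep_of_value, Hc. apply rel_prime_list_gcd; assumption.
Qed.

(* Add(A) is attained. *)
Lemma exists_min_weight_rep (A : list nat) :
  finset_pos A -> rel_prime_set A ->
  exists r0, is_rep A r0 /\
    forall r, is_rep A r -> (rep_weight A r0 <= rep_weight A r)%nat.
Proof.
  intros HA HR.
  set (P := fun w => exists r, is_rep A r /\ rep_weight A r = w).
  destruct (dec_inh_nat_subset_has_unique_least_element P (fun w => classic (P w)))
    as [w0 [[[r0 [Hr0 <-]] Hmin] _]].
  { destruct (exists_rep A HA HR) as [r Hr]. exists (rep_weight A r), r. auto. }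
  exists r0. split; [exact Hr0|]. intros r Hr. apply Hmin. exists r. auto.
Qed.

Definition unused (u A : list nat) : list nat :=
  filter (fun a => if in_dec Nat.eq_dec a u then false else true) A.

Lemma in_used_or_unused (u A : list nat) (n : nat) :
  incl u A -> (In n A <-> In n u \/ In n (unused u A)).
Proof.
  intros Hincl. unfold unused. rewrite filter_In. split.
  - intros Hn. destruct (in_dec Nat.eq_dec n u); [left|right]; auto.
  - intros [Hn|[Hn _]]; auto.
Qed.

Lemma unused_length (u A : list nat) :
  NoDup u -> incl u A -> (length (unused u A) + length u <= length A)%nat.
Proof.
  intros Hnd Hincl. unfold unused.
  set (f := fun a => if in_dec Nat.eq_dec a u then false else true).
  assert (Hu : (length u <= length (filter (fun a => negb (f a)) A))%nat).
  { apply NoDup_incl_length; [exact Hnd|]. intros x Hx. apply filter_In.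
    split; [auto|]. unfold f. destruct (in_dec Nat.eq_dec x u); auto. }
  pose proof (filter_length f A). lia.
Qed.

Theorem mainTheorem5 (A : list nat) :
  finset_pos A -> rel_prime_set A ->
  exists K : R -> Prop,
    N_set K /\ diff_pos_set K A /\
    (forall r, is_rep A r -> ncomp_le K (rep_weight A r)).
Proof.
  intros HA HR.
  destruct (exists_min_weight_rep A HA HR) as [r0 [Hr0 Hmin]].
  pose proof (rep_steps_sum A r0 Hr0) as Hsum.
  set (used := rep_elems r0). set (E := unused used A).
  pose proof (rep_elems_incl A r0 Hr0) as Hincl.
  exists (staircase (rep_steps r0) E). split; [|split].
  - apply staircase_N_set, Hsum.
  - intros n Hn. rewrite (staircase_diff _ E Hsum n Hn), (rep_steps_abs A r0 n Hr0).
    apply in_used_or_unused, Hincl.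
  - intros r Hr. apply ncomp_le_mono with (length (rep_steps r0) + length E)%nat.
    + apply staircase_ncomp, Hsum.
    + pose proof (steps_nonempty _ Hsum). lia.
    + (* m + |E| <= sum of weights + |A| - |r0| = weight r0 <= weight r *)
      specialize (Hmin r Hr). destruct Hr0 as [Hnd _].
      pose proof (unused_length used A Hnd Hincl).
      assert (length used = length r0) by apply length_map.
      unfold rep_weight in *. rewrite rep_steps_length. unfold E. lia.
Qed.
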